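(* For every formula $\phi\in\mathbf{Fm}$, the maps $[\![\phi]\!]:\mathsf{F}_{\mathbf{A}}(\mathbf{Fm})\to\mathbf{A}$ and $(\![\phi]\!):\mathsf{I}_{\mathbf{A}}(\mathbf{Fm})\to\mathbf{A}$ coincide with the maps $f\mapsto f(\phi)$ and $i\mapsto i(\phi)$, respectively.
   Context: Let $\mathbf{A}$ be a complete, frame-distributive and dually frame-distributive, commutative and associative residuated lattice with $1\to\alpha=\alpha$. Let $\mathbf{Fm}$ be the Lindenbaum–Tarski algebra of the basic normal non-distributive modal logic $\mathbf{L}$ over the language $\bot,\top,p,\wedge,\vee,\Box,\Diamond$. Let $\mathsf{F}_{\mathbf{A}}(\mathbf{Fm})$ (resp. $\mathsf{I}_{\mathbf{A}}(\mathbf{Fm})$) be the proper $\mathbf{A}$-filters $f$ ($f(\top)=1,f(\bot)=0$, $\wedge$-preserving) (resp. proper $\mathbf{A}$-ideals $i$: $i(\bot)=1,i(\top)=0$, $i(a\vee b)=i(a)\wedge i(b)$). Canonical model: $I(f,i)=\bigvee_\phi(f(\phi)\otimes i(\phi))$, $R_\Diamond(i,f)=\bigvee_\phi(f(\phi)\otimes i(\Diamond\phi))$, $R_\Box(f,i)=\bigvee_\phi(f(\Box\phi)\otimes i(\phi))$, $g^\uparrow(i)=\bigwedge_f(g(f)\to I(f,i))$, $u^\downarrow(f)=\bigwedge_i(u(i)\to I(f,i))$, and $V(p)=([\![p]\!],(\![p]\!))$ with $[\![p]\!](f)=f(p)$, $(\![p]\!)(i)=i(p)$. $V$ is extended to all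 formulas (writing $V(\phi)=([\![\phi]\!],(\![\phi]\!))$, extension and intension) by: $V(\top)=(\top^{\mathbf{A}^A},(\top^{\mathbf{A}^A})^\uparrow)$, $V(\bot)=((\top^{\mathbf{A}^X})^\downarrow,\top^{\mathbf{A}^X})$, $V(\phi\wedge\psi)=([\![\phi]\!]\wedge[\![\psi]\!],([\![\phi]\!]\wedge[\![\psi]\!])^\uparrow)$, $V(\phi\vee\psi)=(((\![\phi]\!)\wedge(\![\psi]\!))^\downarrow,(\![\phi]\!)\wedge(\![\psi]\!))$, $V(\Box\phi)=(R_\Box^{(0)}[(\![\phi]\!)],(R_\Box^{(0)}[(\![\phi]\!)])^\uparrow)$ with $R_\Box^{(0)}[u](f)=\bigwedge_i(u(i)\to R_\Box(f,i))$, and $V(\Diamond\phi)=((R_\Diamond^{(0)}[[\![\phi]\!]])^\downarrow,R_\Diamond^{(0)}[[\![\phi]\!]])$ with $R_\Diamond^{(0)}[g](i)=\bigwedge_f(g(f)\to R_\Diamond(i,f))$. *)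

Set Implicit Arguments.
Unset Strict Implicit.

Record cres_lattice := CResLattice {
  car :> Type;
  le : car -> car -> Prop;
  le_refl : forall a, le a a;
  le_trans : forall a b c, le a b -> le b c -> le a c;
  le_antisym : forall a b, le a b -> le b a -> a = b;
  sup : (car -> Prop) -> car;
  sup_ub : forall S a, S a -> le a (sup S);
  sup_least : forall S b, (forall a, S a -> le a b) -> le (sup S) b;
  inf : (car -> Prop) -> car;
  inf_lb : forall S a, S a -> le (inf S) a;
  inf_greatest : forall S b, (forall a, S a -> le b a) -> le b (inf S);
  tensor : car -> car -> car;
  impl : car -> car -> car;
  residuation : forall a b c, le (tensor a b) c <-> le a (impl b c)
}.

Section LatticeOps.
Variable A : cres_lattice.
Definition meet (a b : A) : A := inf (fun x => x = a \/ x = b).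
Definition join (a b : A) : A := sup (fun x => x = a \/ x = b).
Definition one : A := inf (fun _ => False).
Definition zero : A := sup (fun _ => False).

Definition frame_distributive : Prop :=
  forall (a : A) (S : A -> Prop),
    meet a (sup S) = sup (fun x => exists s, S s /\ x = meet a s).
Definition dually_frame_distributive : Prop :=
  forall (a : A) (S : A -> Prop),
    join a (inf S) = inf (fun x => exists s, S s /\ x = join a s).
Definition tensor_comm : Prop := forall a b : A, tensor a b = tensor b a.
Definition tensor_assoc : Prop :=
  forall a b c : A, tensor a (tensor b c) = tensor (tensor a b) c.
Definition one_impl : Prop := forall a : A, impl one a = a.

Definition good_lattice : Prop :=
  frame_distributive /\ dually_frame_distributive /\
  tensor_comm /\ tensor_assoc /\ one_impl.
End LatticeOps.

Inductive form (Var : Type) : Type :=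
  | FVar : Var -> form Var
  | FBot : form Var
  | FTop : form Var
  | FAnd : form Var -> form Var -> form Var
  | FOr  : form Var -> form Var -> form Var
  | FBox : form Var -> form Var
  | FDia : form Var -> form Var.
Arguments FBot {Var}.
Arguments FTop {Var}.

Inductive deriv (Var : Type) : form Var -> form Var -> Prop :=
  | d_id   : forall a, deriv a a
  | d_bot  : forall a, deriv FBot a
  | d_top  : forall a, deriv a FTop
  | d_orl  : forall a b, deriv a (FOr a b)
  | d_orr  : forall a b, deriv b (FOr a b)
  | d_andl : forall a b, deriv (FAnd a b) a
  | d_andr : forall a b, deriv (FAnd a b) b
  | d_boxtop : deriv FTop (FBox FTop)
  | d_diabot : deriv (FDia FBot) FBot
  | d_boxand : forall a b, deriv (FAnd (FBox a) (FBox b)) (FBox (FAnd a b))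
  | d_diaor  : forall a b, deriv (FDia (FOr a b)) (FOr (FDia a) (FDia b))
  | d_cut  : forall a b c, deriv a b -> deriv b c -> deriv a c
  | d_orE  : forall a b c, deriv a c -> deriv b c -> deriv (FOr a b) c
  | d_andI : forall a b c, deriv c a -> deriv c b -> deriv c (FAnd a b)
  | d_boxm : forall a b, deriv a b -> deriv (FBox a) (FBox b)
  | d_diam : forall a b, deriv a b -> deriv (FDia a) (FDia b).

(* Elements of the Lindenbaum-Tarski algebra Fm are classes of
   interderivable formulas; a map on Fm is a map on formulas that is
   invariant under interderivability. *)
Definition interderivable (Var : Type) (a b : form Var) : Prop :=
  deriv a b /\ deriv b a.

Section Canonical.
Variables (Var : Type) (A : cres_lattice).

Record filter := Filter {
  fval :> form Var -> A;
  f_resp : forall a b, interderivable a b -> fval a = fval b;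
  f_top : fval FTop = one A;
  f_bot : fval FBot = zero A;
  f_and : forall a b, fval (FAnd a b) = meet (fval a) (fval b)
}.

Record ideal := Ideal {
  ival :> form Var -> A;
  i_resp : forall a b, interderivable a b -> ival a = ival b;
  i_bot : ival FBot = one A;
  i_top : ival FTop = zero A;
  i_or : forall a b, ival (FOr a b) = meet (ival a) (ival b)
}.

Definition Ican (f : filter) (i : ideal) : A :=
  sup (fun x => exists phi, x = tensor (f phi) (i phi)).
Definition Rdia (i : ideal) (f : filter) : A :=
  sup (fun x => exists phi, x = tensor (f phi) (i (FDia phi))).
Definition Rbox (f : filter) (i : ideal) : A :=
  sup (fun x => exists phi, x = tensor (f (FBox phi)) (i phi)).

Definition up (g : filter -> A) (i : ideal) : A :=
  inf (fun x => exists f : filter, x = impl (g f) (Ican f i)).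
Definition down (u : ideal -> A) (f : filter) : A :=
  inf (fun x => exists i : ideal, x = impl (u i) (Ican f i)).

Definition Rbox0 (u : ideal -> A) (f : filter) : A :=
  inf (fun x => exists i : ideal, x = impl (u i) (Rbox f i)).
Definition Rdia0 (g : filter -> A) (i : ideal) : A :=
  inf (fun x => exists f : filter, x = impl (g f) (Rdia i f)).

(* The canonical valuation V, extended to all formulas:
   V phi = (extension [[phi]], intension (phi)). *)
Fixpoint V (phi : form Var) : (filter -> A) * (ideal -> A) :=
  match phi with
  | FVar p => (fun f : filter => fval f (FVar p), fun i : ideal => ival i (FVar p))
  | FTop => (fun _ => one A, up (fun _ => one A))
  | FBot => (down (fun _ => one A), fun _ => one A)
  | FAnd a b =>
      let g := fun f => meet (fst (V a) f) (fst (V b) f) in (g, up g)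
  | FOr a b =>
      let u := fun i => meet (snd (V a) i) (snd (V b) i) in (down u, u)
  | FBox a => let g := Rbox0 (snd (V a)) in (g, up g)
  | FDia a => let u := Rdia0 (fst (V a)) in (down u, u)
  end.

Definition ext (phi : form Var) : filter -> A := fst (V phi).
Definition intn (phi : form Var) : ideal -> A := snd (V phi).
End Canonical.

From Stdlib Require Import Classical.
Set Implicit Arguments.
Unset Strict Implicit.

(* Each clause of V applies one of the operations
   (.)^up, (.)^down, R_box^(0), R_dia^(0) to a map that is, by induction,
   evaluation at a subformula c; all four are infima of residuals
   /\_x (g x -> r x), and such an infimum equals b as soon as
   b (x) g x <= r x for all x and some x0 has g x0 = 1 and r x0 <= b.
   The first condition holds because the term for c itself occurs in the
   join defining I, R_box or R_dia.  For x0 take the crisp principal filter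
   of c (resp. principal ideal); it is proper unless c |- bot
   (resp. top |- c), and then b = 1 anyway. *)

Section Lattice.
Variable A : cres_lattice.

Lemma le_one (a : A) : le a (one A).
Proof. apply inf_greatest. intros x []. Qed.

Lemma zero_le (a : A) : le (zero A) a.
Proof. apply sup_least. intros x []. Qed.

Lemma meet_l (a b : A) : le (meet a b) a.
Proof. apply inf_lb. now left. Qed.

Lemma meet_r (a b : A) : le (meet a b) b.
Proof. apply inf_lb. now right. Qed.

Lemma meet_glb (a b c : A) : le c a -> le c b -> le c (meet a b).
Proof. intros Hca Hcb. apply inf_greatest. intros x [-> | ->]; assumption. Qed.

Lemma meet_idem (a : A) : meet a a = a.
Proof. apply le_antisym; [apply meet_l | apply meet_glb; apply le_refl]. Qed.

Lemma meet_zero_l (a : A) : meet (zero A) a = zero A.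
Proof. apply le_antisym; [apply meet_l | apply zero_le]. Qed.

Lemma meet_zero_r (a : A) : meet a (zero A) = zero A.
Proof. apply le_antisym; [apply meet_r | apply zero_le]. Qed.

Definition crisp (P : Prop) : A := sup (fun x => x = one A /\ P).

Lemma crisp_true (P : Prop) : P -> crisp P = one A.
Proof. intros HP. apply le_antisym; [apply le_one | now apply sup_ub]. Qed.

Lemma crisp_false (P : Prop) : ~ P -> crisp P = zero A.
Proof.
  intros HnP. apply le_antisym; [| apply zero_le].
  apply sup_least. intros x [_ HP]. contradiction.
Qed.

Lemma crisp_iff (P Q : Prop) : (P <-> Q) -> crisp P = crisp Q.
Proof.
  intros HPQ. destruct (classic P) as [HP | HnP].
  - rewrite !crisp_true; tauto.
  - rewrite !crisp_false; tauto.
Qed.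

Lemma crisp_and (P Q : Prop) : crisp (P /\ Q) = meet (crisp P) (crisp Q).
Proof.
  destruct (classic P) as [HP | HnP]; [destruct (classic Q) as [HQ | HnQ] |].
  - rewrite !crisp_true; auto. now rewrite meet_idem.
  - rewrite (crisp_true HP), !crisp_false by tauto. now rewrite meet_zero_r.
  - rewrite !crisp_false by tauto. now rewrite meet_zero_l.
Qed.

Section Residuation.
Hypotheses (Hcomm : tensor_comm A) (Hone : one_impl A).

Lemma tensor_one_le (a : A) : le (tensor (one A) a) a.
Proof. rewrite Hcomm. apply residuation. rewrite Hone. apply le_refl. Qed.

Lemma tensor_crisp_le (P : Prop) (a b : A) :
  (P -> le a b) -> le (tensor (crisp P) a) b.
Proof.
  intros Hab. apply residuation, sup_least. intros x [-> HP].
  apply residuation. eapply le_trans; [apply tensor_one_le | auto].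
Qed.

Lemma tensor_crisp_le_r (P : Prop) (a b : A) :
  (P -> le a b) -> le (tensor a (crisp P)) b.
Proof. rewrite Hcomm. apply tensor_crisp_le. Qed.

Lemma inf_impl_eq (X : Type) (g r : X -> A) (b : A) :
  (forall x, le (tensor b (g x)) (r x)) ->
  b = one A \/ (exists2 x0, g x0 = one A & le (r x0) b) ->
  inf (fun z => exists x, z = impl (g x) (r x)) = b.
Proof.
  intros Hlow Hup. apply le_antisym.
  - destruct Hup as [-> | [x0 Hgx0 Hrx0]]; [apply le_one |].
    eapply le_trans; [apply inf_lb; exists x0; reflexivity |].
    now rewrite Hgx0, Hone.
  - apply inf_greatest. intros z [x ->]. now apply residuation.
Qed.

End Residuation.
End Lattice.

Section CanonicalModel.
Variables (Var : Type) (A : cres_lattice).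

Lemma filter_mono (f : filter Var A) (a b : form Var) :
  deriv a b -> le (f a) (f b).
Proof.
  intros Hab. rewrite (f_resp f (a := a) (b := FAnd a b)), f_and; [apply meet_r |].
  split; [apply d_andI; [apply d_id | exact Hab] | apply d_andl].
Qed.

Lemma ideal_anti (i : ideal Var A) (a b : form Var) :
  deriv a b -> le (i b) (i a).
Proof.
  intros Hab. rewrite (i_resp i (a := b) (b := FOr a b)), i_or; [apply meet_l |].
  split; [apply d_orr | apply d_orE; [exact Hab | apply d_id]].
Qed.

Lemma filter_eq_one (f : filter Var A) (c : form Var) :
  deriv FTop c -> f c = one A.
Proof.
  intros Hc. apply le_antisym; [apply le_one |].
  rewrite <- (f_top f). now apply filter_mono.
Qed.

Lemma ideal_eq_one (i : ideal Var A) (c : form Var) :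
  deriv c FBot -> i c = one A.
Proof.
  intros Hc. apply le_antisym; [apply le_one |].
  rewrite <- (i_bot i). now apply ideal_anti.
Qed.

Definition principal_filter (c : form Var) (Hc : ~ deriv c FBot) : filter Var A.
Proof.
  refine (@Filter Var A (fun a => crisp A (deriv c a)) _ _ _ _).
  - intros a b [Hab Hba]. apply crisp_iff. split; intro; eapply d_cut; eauto.
  - apply crisp_true, d_top.
  - now apply crisp_false.
  - intros a b. rewrite <- crisp_and. apply crisp_iff. split.
    + intros Hd. split; eapply d_cut; eauto; [apply d_andl | apply d_andr].
    + intros [Ha Hb]. now apply d_andI.
Defined.

Definition principal_ideal (c : form Var) (Hc : ~ deriv FTop c) : ideal Var A.
Proof.
  refine (@Ideal Var A (fun a => crisp A (deriv a c)) _ _ _ _).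
  - intros a b [Hab Hba]. apply crisp_iff. split; intro; eapply d_cut; eauto.
  - apply crisp_true, d_bot.
  - now apply crisp_false.
  - intros a b. rewrite <- crisp_and. apply crisp_iff. split.
    + intros Hd. split; eapply d_cut; eauto; [apply d_orl | apply d_orr].
    + intros [Ha Hb]. now apply d_orE.
Defined.

Section PrincipalBounds.
Hypotheses (Hcomm : tensor_comm A) (Hone : one_impl A).

Lemma sup_principal_filter_le (c : form Var) (Hc : ~ deriv c FBot)
  (h : form Var -> A) :
  (forall a b, deriv a b -> le (h b) (h a)) ->
  le (sup (fun x => exists phi, x = tensor (principal_filter Hc phi) (h phi))) (h c).
Proof.
  intros Hh. apply sup_least. intros x [phi ->].
  apply tensor_crisp_le; auto.
Qed.

Lemma sup_principal_ideal_le (c : form Var) (Hc : ~ deriv FTop c)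
  (h : form Var -> A) :
  (forall a b, deriv a b -> le (h a) (h b)) ->
  le (sup (fun x => exists phi, x = tensor (h phi) (principal_ideal Hc phi))) (h c).
Proof.
  intros Hh. apply sup_least. intros x [phi ->].
  apply tensor_crisp_le_r; auto.
Qed.

Lemma up_eq (g : filter Var A -> A) (c : form Var) (i : ideal Var A) :
  (forall f, g f = f c) -> up g i = i c.
Proof.
  intros Hg. apply inf_impl_eq; auto.
  - intros f. rewrite Hg, Hcomm. apply sup_ub. now exists c.
  - destruct (classic (deriv c FBot)) as [Hbot | Hc].
    + left. now apply ideal_eq_one.
    + right. exists (principal_filter Hc).
      * rewrite Hg. apply crisp_true, d_id.
      * apply sup_principal_filter_le, ideal_anti.
Qed.

Lemma down_eq (u : ideal Var A -> A) (c : form Var) (f : filter Var A) :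
  (forall i, u i = i c) -> down u f = f c.
Proof.
  intros Hu. apply inf_impl_eq; auto.
  - intros i. rewrite Hu. apply sup_ub. now exists c.
  - destruct (classic (deriv FTop c)) as [Htop | Hc].
    + left. now apply filter_eq_one.
    + right. exists (principal_ideal Hc).
      * rewrite Hu. apply crisp_true, d_id.
      * apply sup_principal_ideal_le, filter_mono.
Qed.

Lemma Rbox0_eq (u : ideal Var A -> A) (c : form Var) (f : filter Var A) :
  (forall i, u i = i c) -> Rbox0 u f = f (FBox c).
Proof.
  intros Hu. apply inf_impl_eq; auto.
  - intros i. rewrite Hu. apply sup_ub. now exists c.
  - destruct (classic (deriv FTop c)) as [Htop | Hc].
    + left. exact (filter_eq_one f (d_cut (d_boxtop Var) (d_boxm Htop))).
    + right. exists (principal_ideal Hc).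
      * rewrite Hu. apply crisp_true, d_id.
      * apply (sup_principal_ideal_le Hc (h := fun phi => f (FBox phi))).
        intros a b Hab. now apply filter_mono, d_boxm.
Qed.

Lemma Rdia0_eq (g : filter Var A -> A) (c : form Var) (i : ideal Var A) :
  (forall f, g f = f c) -> Rdia0 g i = i (FDia c).
Proof.
  intros Hg. apply inf_impl_eq; auto.
  - intros f. rewrite Hg, Hcomm. apply sup_ub. now exists c.
  - destruct (classic (deriv c FBot)) as [Hbot | Hc].
    + left. exact (ideal_eq_one i (d_cut (d_diam Hbot) (d_diabot Var))).
    + right. exists (principal_filter Hc).
      * rewrite Hg. apply crisp_true, d_id.
      * apply (sup_principal_filter_le Hc (h := fun phi => i (FDia phi))).
        intros a b Hab. now apply ideal_anti, d_diam.
Qed.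

End PrincipalBounds.
End CanonicalModel.

Theorem mainTheorem2 (Var : Type) (A : cres_lattice) (HA : good_lattice A)
  (phi : form Var) :
  (forall f : filter Var A, ext phi f = f phi) /\
  (forall i : ideal Var A, intn phi i = i phi).
Proof.
  destruct HA as (_ & _ & Hcomm & _ & Hone).
  unfold ext, intn.
  induction phi as [p | | | a [IHa1 IHa2] b [IHb1 IHb2] | a [IHa1 IHa2] b [IHb1 IHb2]
                   | a [_ IHa2] | a [IHa1 _]]; simpl.
  - now split.
  - split; [| now intros i; rewrite i_bot].
    intros f. apply down_eq; auto. intros i. now rewrite i_bot.
  - split; [now intros f; rewrite f_top |].
    intros i. apply up_eq; auto. intros f. now rewrite f_top.
  - assert (Hg : forall f : filter Var A,
               meet (fst (V A a) f) (fst (V A b) f) = f (FAnd a b)).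
    { intros f. now rewrite IHa1, IHb1, f_and. }
    split; [exact Hg | intros i; now apply up_eq].
  - assert (Hu : forall i : ideal Var A,
               meet (snd (V A a) i) (snd (V A b) i) = i (FOr a b)).
    { intros i. now rewrite IHa2, IHb2, i_or. }
    split; [intros f; now apply down_eq | exact Hu].
  - assert (Hg : forall f, Rbox0 (snd (V A a)) f = f (FBox a)).
    { intros f. now apply Rbox0_eq. }
    split; [exact Hg | intros i; now apply up_eq].
  - assert (Hu : forall i, Rdia0 (fst (V A a)) i = i (FDia a)).
    { intros i. now apply Rdia0_eq. }
    split; [intros f; now apply down_eq | exact Hu].
Qed.
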